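(* Under the standing setup: (i) if $\delta_B\ge 0$, then $D\in[D_{NM},D^+_{MOB}]$; (ii) if $\delta_B\le 0$, then $D\in[D^-_{MOB},D_{NM}]$; (iii) the bounds in (i) and (ii) are sharp under the respective sign assumption (absent additional information).
   Context: Let $(X,Y,N)$ be a random triple with $X\in\{0,1\}$, $Y$ real-valued, $N$ taking values in a finite set $\mathcal N$. Write $p_n=\Pr(N=n)$, $X_n=\mathbb E[X\mid N=n]$, $Y_n=\mathbb E[Y\mid N=n]$, $X_N=\mathbb E[X\mid N]$, $Y_N=\mathbb E[Y\mid N]$. Assume some $n$ has $p_n>0$ and $X_n\in(0,1)$, and fix reals $\underline Y\le\overline Y$ with $\mathbb E[Y\mid X=x,N=n]\in[\underline Y,\overline Y]$ whenever $\Pr(X=x,N=n)>0$. $D=\mathbb E[Y\mid X=1]-\mathbb E[Y\mid X=0]$; $\delta_B=\mathbb E[\mathrm{Cov}(Y,X\mid N)]$; $D_{NM}=\mathbb E[X_NY_N]/\mathbb E[X_N]-\mathbb E[(1-X_N)Y_N]/\mathbb E[1-X_N]$; $D^+_{MOB}=\big(\mathbb E[\min\{Y_N-\underline Y(1-X_N),\overline Y X_N\}]-\mathbb E[X]\mathbb E[Y]\big)/\mathrm{Var}(X)$, $D^-_{MOB}=\big(\mathbb E[Y](1-\mathbb E[X])-\mathbb E[\min\{Y_N-\underline Y X_N,\overline Y(1-X_N)\}]\big)/\mathrm{Var}(X)$. Sharpness under an assumption $\mathcal A$: the parameter lies in the interval for every joint distribution satisfying the standing assumptions and $\mathcal A$,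 and every value in the interval is attained by some joint distribution of $(X,Y,N)$ with the same observed $(p_n,X_n,Y_n)_n$, satisfying the standing bound and $\mathcal A$. *)

From HB Require Import structures.
From mathcomp Require Import all_boot all_order all_algebra.
From mathcomp Require Import all_classical all_reals all_analysis.
Set Implicit Arguments. Unset Strict Implicit. Unset Printing Implicit Defensive.
Import Order.TTheory GRing.Theory Num.Theory.
Local Open Scope classical_set_scope.
Local Open Scope ring_scope.

Section Defs.
Context {d : measure_display} {T : measurableType d} {R : realType}
  {I : finType}.
Variables (P : probability T R) (X Y : T -> R) (N : T -> I).

Definition Ex (f : T -> R) : R := fine ('E_P[f])%E.
Definition prob (A : set T) : R := fine (P A).
Definition condE (f : T -> R) (A : set T) : R :=
  Ex (fun t => f t * \1_A t) / prob A.

Definition Nev (n : I) : set T := [set t | N t = n].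
Definition XNev (x : R) (n : I) : set T := [set t | X t = x /\ N t = n].

Definition p_ (n : I) : R := prob (Nev n).
Definition X_ (n : I) : R := condE X (Nev n).
Definition Y_ (n : I) : R := condE Y (Nev n).
Definition XN : T -> R := fun t => X_ (N t).
Definition YN : T -> R := fun t => Y_ (N t).

Definition Dgap : R :=
  condE Y [set t | X t = 1] - condE Y [set t | X t = 0].
Definition covN (n : I) : R :=
  condE (fun t => Y t * X t) (Nev n) - Y_ n * X_ n.
Definition deltaB : R := Ex (fun t => covN (N t)).
Definition D_NM : R :=
  Ex (fun t => XN t * YN t) / Ex XN
  - Ex (fun t => (1 - XN t) * YN t) / Ex (fun t => 1 - XN t).
Definition VarX : R := fine (covariance P X X).
Definition D_MOBp (Ylo Yhi : R) : R :=
  (Ex (fun t => Num.min (YN t - Ylo * (1 - XN t)) (Yhi * XN t))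
   - Ex X * Ex Y) / VarX.
Definition D_MOBm (Ylo Yhi : R) : R :=
  (Ex Y * (1 - Ex X)
   - Ex (fun t => Num.min (YN t - Ylo * XN t) (Yhi * (1 - XN t)))) / VarX.

Definition standing (Ylo Yhi : R) : Prop :=
  [/\ measurable_fun setT X /\ (forall t, X t = 0 \/ X t = 1),
      measurable_fun setT Y /\ P.-integrable setT (EFin \o Y),
      (forall n, measurable (Nev n)),
      (exists n, 0 < p_ n /\ 0 < X_ n < 1) &
      (forall (x : R) n, (x = 0 \/ x = 1) -> 0 < prob (XNev x n) ->
          Ylo <= condE Y (XNev x n) <= Yhi)].

End Defs.

Definition same_observed {R : realType} {I : finType}
  {d : measure_display} {T : measurableType d} (P : probability T R)
  (X Y : T -> R) (N : T -> I)
  {d' : measure_display} {T' : measurableType d'} (P' : probability T' R)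
  (X' Y' : T' -> R) (N' : T' -> I) : Prop :=
  forall n, [/\ p_ P' N' n = p_ P N n, X_ P' X' N' n = X_ P X N n
              & Y_ P' Y' N' n = Y_ P Y N n].

From HB Require Import structures.
From mathcomp Require Import all_boot all_order all_algebra.
From mathcomp Require Import all_classical all_reals all_analysis.
From mathcomp Require Import measurable_realfun ring lra.
Import Order.TTheory GRing.Theory Num.Theory.
Local Open Scope classical_set_scope.
Local Open Scope ring_scope.

(* Everything is a function of the cell data Pr(X = b, N = n) and E[Y; X = b, N = n].
   With Q1 = E[X] and S = E[Y], let gap Z := (Z - Q1 S) / Var X, an increasing affine
   map. Then D = gap E[XY], D_NM = gap E[X_N Y_N], D^+_MOB = gap M, D^-_MOB = gap L and
   delta_B = E[XY] - E[X_N Y_N], where L and M sum over the strata the least and the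
   largest value of E[Y; X = 1, N = n] compatible with the observed data of stratum n
   and the bounds on E[Y | X, N]. Both E[XY] and E[X_N Y_N] lie in [L, M], which gives
   (i) and (ii). Conversely every value in [L, M] is a sum of compatible per-stratum
   values, realised on the same space by a Y' that is constant on each cell; Y' has the
   observed data of Y, hence its E[X_N Y_N], which gives (iii). *)

Lemma divfK_sandwich {R : realFieldType} (a b q s : R) :
  a * q <= s <= b * q -> s / q * q = s.
Proof.
have [->|q_neq0] := eqVneq q 0; last by rewrite mulfVK.
by rewrite !mulr0 => /andP[s_ge0 s_le0]; apply/le_anti; rewrite s_ge0 s_le0.
Qed.

Lemma sum_interpolate {R : realFieldType} {I : finType} (lo hi : I -> R) (z : R) :
  (forall i, lo i <= hi i) -> \sum_i lo i <= z -> z <= \sum_i hi i ->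
  exists2 f : I -> R, forall i, lo i <= f i <= hi i & \sum_i f i = z.
Proof.
move=> lohi loz zhi.
have [eqA|neqA] := eqVneq (\sum_i lo i) (\sum_i hi i).
  by exists lo => [i|]; [rewrite lexx lohi|apply/le_anti; rewrite loz eqA zhi].
set A := \sum_i lo i in loz neqA *; set B := \sum_i hi i in zhi neqA *.
have AltB : A < B by rewrite lt_neqAle neqA (le_trans loz zhi).
pose l := (z - A) / (B - A).
have [l_ge0 l_le1] : 0 <= l /\ l <= 1.
  by rewrite /l ler_pdivrMr ?subr_gt0 // ler_pdivlMr ?subr_gt0 //; split; lra.
exists (fun i => lo i + l * (hi i - lo i)) => [i|].
  by have lohi_i := lohi i; apply/andP; split; nra.
rewrite big_split -mulr_sumr sumrB -/A -/B.
have -> : l * (B - A) = z - A by rewrite /l mulfVK // subr_eq0 eq_sym.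
by rewrite /= subrKC.
Qed.

(* One stratum N = n: [q1], [q0] stand for Pr(X = 1, N = n), Pr(X = 0, N = n), [S] for
   E[Y; N = n] and [s1] for E[Y; X = 1, N = n]; [cell_proj] is then E[X_N Y_N; N = n]. *)
Section Cell.
Context {R : realFieldType} (Ylo Yhi : R).

Definition cell_admissible (q1 q0 S s1 : R) : Prop :=
  Ylo * q1 <= s1 <= Yhi * q1 /\ Ylo * q0 <= S - s1 <= Yhi * q0.

Definition cell_lo (q1 q0 S : R) : R := S - Num.min (S - Ylo * q1) (Yhi * q0).
Definition cell_hi (q1 q0 S : R) : R := Num.min (S - Ylo * q0) (Yhi * q1).
Definition cell_proj (q1 q0 S : R) : R := q1 * S / (q1 + q0).

Lemma cell_admissibleP q1 q0 S s1 :
  cell_admissible q1 q0 S s1 <-> cell_lo q1 q0 S <= s1 <= cell_hi q1 q0 S.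
Proof.
rewrite /cell_admissible /cell_lo /cell_hi.
case: (leP (S - Ylo * q1)) => ?; case: (leP (S - Ylo * q0)) => ?;
by split=> [[/andP[? ?] /andP[? ?]]|/andP[? ?]]; [apply/andP|split; apply/andP]; split; lra.
Qed.

End Cell.

Section CellScaling.
Context {R : realFieldType} {Ylo Yhi q1 q0 S s1 : R}.
Hypotheses (q1_ge0 : 0 <= q1) (q0_ge0 : 0 <= q0) (adm : cell_admissible Ylo Yhi q1 q0 S s1).

Lemma cell_lo_le_hi : cell_lo Ylo Yhi q1 q0 S <= cell_hi Ylo Yhi q1 q0 S.
Proof. by have /cell_admissibleP/andP[lo_s1 s1_hi] := adm; apply: le_trans s1_hi. Qed.

Local Notation pp := (q1 + q0).

(* An empty stratum has vanishing data, so the identities below survive x / 0 = 0. *)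
Lemma cell_null : pp = 0 -> [/\ q1 = 0, q0 = 0, S = 0 & s1 = 0].
Proof.
move: q1_ge0 q0_ge0 adm => ? ? [/andP[lo1 hi1] /andP[lo0 hi0]] pp0.
have q10 : q1 = 0 by lra.
have q00 : q0 = 0 by lra.
by rewrite q10 q00 !mulr0 in lo1 hi1 lo0 hi0; split => //; lra.
Qed.

Lemma cell_proj_admissible : cell_admissible Ylo Yhi q1 q0 S (cell_proj q1 q0 S).
Proof.
have [/cell_null[-> -> -> _]|pp_neq0] := eqVneq pp 0.
  by rewrite /cell_admissible /cell_proj !(mulr0, mul0r, subr0) lexx.
have pp_gt0 : 0 < pp by rewrite lt_def pp_neq0 addr_ge0.
move: q1_ge0 q0_ge0 adm => ? ? [/andP[? ?] /andP[? ?]].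
have Sge : Ylo * pp <= S by rewrite mulrDr; lra.
have Sle : S <= Yhi * pp by rewrite mulrDr; lra.
rewrite /cell_admissible.
have -> : S - cell_proj q1 q0 S = q0 * S / pp by rewrite /cell_proj; field.
rewrite /cell_proj !ler_pdivlMr ?ler_pdivrMr //.
by split; apply/andP; split; nra.
Qed.

Lemma cell_X_scaled : q1 / pp * pp = q1.
Proof. by have [/cell_null[-> _ _ _]|?] := eqVneq pp 0; [rewrite !mul0r|rewrite mulfVK]. Qed.

Lemma cell_notX_scaled : (1 - q1 / pp) * pp = q0.
Proof. by rewrite mulrBl mul1r cell_X_scaled addrC addKr. Qed.

Lemma cell_XY_scaled : q1 / pp * (S / pp) * pp = cell_proj q1 q0 S.
Proof.
have [/cell_null[-> -> -> _]|?] := eqVneq pp 0; last by rewrite /cell_proj; field.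
by rewrite /cell_proj !(mul0r, mulr0).
Qed.

Lemma cell_notXY_scaled : (1 - q1 / pp) * (S / pp) * pp = S - cell_proj q1 q0 S.
Proof.
have [/cell_null[-> -> -> _]|?] := eqVneq pp 0; last by rewrite /cell_proj; field.
by rewrite /cell_proj !(mul0r, mulr0, subr0).
Qed.

Lemma cell_cov_scaled : (s1 / pp - S / pp * (q1 / pp)) * pp = s1 - cell_proj q1 q0 S.
Proof.
have [/cell_null[-> -> -> ->]|?] := eqVneq pp 0; last by rewrite /cell_proj; field.
by rewrite /cell_proj !(mul0r, mulr0, subr0).
Qed.

Lemma cell_hi_scaled :
  Num.min (S / pp - Ylo * (1 - q1 / pp)) (Yhi * (q1 / pp)) * pp = cell_hi Ylo Yhi q1 q0 S.
Proof.
have [/cell_null[-> -> -> _]|?] := eqVneq pp 0.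
  by rewrite /cell_hi !(mul0r, mulr0, subr0, addr0) ?minxx ?subrr.
by rewrite minr_pMl ?addr_ge0 //; congr Num.min; field.
Qed.

Lemma cell_lo_scaled :
  Num.min (S / pp - Ylo * (q1 / pp)) (Yhi * (1 - q1 / pp)) * pp = S - cell_lo Ylo Yhi q1 q0 S.
Proof.
have [/cell_null[-> -> -> _]|?] := eqVneq pp 0.
  by rewrite /cell_lo !(mul0r, mulr0, subr0, addr0) ?minxx ?subrr.
by rewrite /cell_lo subKr minr_pMl ?addr_ge0 //; congr Num.min; field.
Qed.

End CellScaling.

(* For a 0/1-valued X with E[X] = Q1, E[Y] = S and E[XY] = Z, this is Cov(X, Y) / Var(X). *)
Definition gap {R : realFieldType} (Q1 S Z : R) : R := (Z - Q1 * S) / (Q1 - Q1 ^+ 2).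

Section Gap.
Context {R : realFieldType} {Q1 S : R}.
Hypothesis Q1_in01 : 0 < Q1 < 1.
Local Notation gap := (gap Q1 S).

Let V_gt0 : 0 < Q1 - Q1 ^+ 2.
Proof. by move: Q1_in01 => /andP[? ?]; rewrite expr2; nra. Qed.

Lemma means_diff_gap Z : Z / Q1 - (S - Z) / (1 - Q1) = gap Z.
Proof.
move: Q1_in01 => /andP[Q1_gt0 Q1_lt1].
by rewrite /gap; field; rewrite ?gt_eqF ?subr_gt0 // -subr_gt0.
Qed.

Lemma ler_gap Z Z' : (gap Z <= gap Z') = (Z <= Z').
Proof. by rewrite ler_pM2r ?invr_gt0 // lerD2r. Qed.

Lemma gap_onto W M D : gap W <= D <= gap M ->
  exists2 Z, W <= Z <= M & gap Z = D.
Proof.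
have gapK : gap (D * (Q1 - Q1 ^+ 2) + Q1 * S) = D by rewrite /gap addrK mulfK ?gt_eqF.
exists (D * (Q1 - Q1 ^+ 2) + Q1 * S) => //.
by rewrite -(ler_gap W) -(ler_gap _ M) gapK.
Qed.

End Gap.

Section Expectation.
Context {R : realType} {d : measure_display} {T : measurableType d} (P : probability T R).

Lemma Lfun_measurable (f : T -> R) : f \in Lfun P 1 -> measurable_fun setT f.
Proof. by move/Lfun1_integrable/measurable_int/measurable_EFinP. Qed.

Lemma LfunZ (f : T -> R) (k : R) : f \in Lfun P 1 -> (fun t => k * f t) \in Lfun P 1.
Proof. by move=> f1; exact: rpredZ. Qed.

Lemma ExD (f g : T -> R) : f \in Lfun P 1 -> g \in Lfun P 1 ->
  Ex P (fun t => f t + g t) = Ex P f + Ex P g.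
Proof. by move=> f1 g1; rewrite /Ex (expectationD f1 g1) fineD ?expectation_fin_num. Qed.

Lemma ExZ (f : T -> R) (k : R) : f \in Lfun P 1 -> Ex P (fun t => k * f t) = k * Ex P f.
Proof.
move=> f1; have -> : (fun t => k * f t) = k \o* f by apply/funext => t /=; rewrite mulrC.
by rewrite /Ex (expectationZl _ f1) fineM ?expectation_fin_num.
Qed.

Lemma Ex_cst (c : R) : Ex P (fun _ => c) = c.
Proof. by rewrite /Ex (expectation_cst P c). Qed.

Lemma Ex_indic (A : set T) : measurable A -> Ex P (\1_A) = prob P A.
Proof. by move=> mA; rewrite /Ex expectation_indic. Qed.

Lemma Lfun_indic (A : set T) : measurable A -> (\1_A : T -> R) \in Lfun P 1.
Proof. by move=> mA; apply/Lfun1_integrable; exact: integrable_indic. Qed.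

Lemma Lfun_mul_indic (f : T -> R) (A : set T) : measurable A -> f \in Lfun P 1 ->
  (fun t => f t * \1_A t) \in Lfun P 1.
Proof.
move=> mA /Lfun1_integrable f1; apply/Lfun1_integrable.
apply: (integrableMl measurableT f1) => //; exists 1; split => // M M1 t _ /=.
by rewrite indicE; case: (t \in A); rewrite ?normr1 ?normr0 ltW // (le_lt_trans ler01).
Qed.

Lemma Ex_mul_indic_null (f : T -> R) (A : set T) : measurable A -> f \in Lfun P 1 ->
  prob P A = 0 -> Ex P (fun t => f t * \1_A t) = 0.
Proof.
move=> mA /Lfun_measurable mf PA0; rewrite /Ex unlock.
have -> : (fun t => (f t * \1_A t)%:E) = ((EFin \o f) \_ A)%E.
  by apply/funext => t; rewrite /patch indicE; case: (t \in A); rewrite /= ?mulr1 ?mulr0.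
rewrite -integral_mkcond null_set_integral //.
  exact/measurable_EFinP/(measurable_funS measurableT (subsetT A)).
by rewrite -[LHS]fineK ?fin_num_measure // -/(prob P A) PA0.
Qed.

Lemma Ex_sum {J : Type} (r : seq J) (F : J -> T -> R) :
  (forall j, F j \in Lfun P 1) ->
  (fun t => \sum_(j <- r) F j t) \in Lfun P 1 /\
  Ex P (fun t => \sum_(j <- r) F j t) = \sum_(j <- r) Ex P (F j).
Proof.
move=> F1; elim: r => [|j r [IH1 IH2]].
  rewrite big_nil; under eq_fun do rewrite big_nil.
  by split; [exact: (Lfun_cst P 0 1)|exact: Ex_cst].
under eq_fun do rewrite big_cons.
by rewrite big_cons; split; [exact: rpredD|rewrite ExD // IH2].
Qed.

End Expectation.

(** * Cell expectations *)

Section Cells.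
Context {R : realType} {I : finType} {d : measure_display} {T : measurableType d}
  (P : probability T R) (X : T -> R) (N : T -> I).

Definition cell (b : bool) (n : I) : set T := XNev X N b%:R n.
Definition cellP (b : bool) (n : I) : R := prob P (cell b n).
Definition cellE (Y : T -> R) (b : bool) (n : I) : R := Ex P (fun t => Y t * \1_(cell b n) t).
Definition Ytot (Y : T -> R) (n : I) : R := cellE Y true n + cellE Y false n.
Definition of_cells (A : bool -> I -> R) (t : T) : R := A (X t == 1) (N t).

Definition cells_sum (F : R -> R -> R -> R) (Y : T -> R) : R :=
  \sum_n F (cellP true n) (cellP false n) (Ytot Y n).
Definition cells_admissible (Ylo Yhi : R) (Y : T -> R) : Prop :=
  forall n, cell_admissible Ylo Yhi (cellP true n) (cellP false n) (Ytot Y n) (cellE Y true n).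

Lemma cellP_ge0 b n : 0 <= cellP b n.
Proof. by rewrite fine_ge0 // measure_ge0. Qed.

Hypotheses (mX : measurable_fun setT X) (X01 : forall t, X t = 0 \/ X t = 1)
  (mN : forall n, measurable (Nev N n)).

Lemma X_bool t : X t = (X t == 1)%:R.
Proof. by case: (X01 t) => ->; rewrite ?eqxx // eq_sym oner_eq0. Qed.

Lemma measurable_X_eq (x : R) : measurable [set t | X t = x].
Proof. by have := mX measurableT _ (measurable_set1 x); rewrite setTI. Qed.

Lemma measurable_cell b n : measurable (cell b n).
Proof. exact: (measurableI _ _ (measurable_X_eq b%:R) (mN n)). Qed.

Lemma indic_cell b n t : \1_(cell b n) t = (((X t == 1) == b) && (N t == n))%:R :> R.
Proof.
rewrite indicE; suff -> : (t \in cell b n) = ((X t == 1) == b) && (N t == n) by [].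
apply/idP/idP => [/set_mem[Xt ->]|].
  by rewrite Xt eqxx andbT; case: b {Xt}; rewrite ?eqxx //= [_ == 1]eq_sym oner_eq0.
by move=> /andP[/eqP <- /eqP <-]; apply/mem_set; split => //; exact: X_bool.
Qed.

Lemma of_cells_decomp A t : of_cells A t = \sum_n \sum_(b : bool) A b n * \1_(cell b n) t.
Proof.
rewrite (bigD1 (N t)) //= [X in _ + X]big1 => [|n /negbTE Ntn]; last first.
  by apply: big1 => b _; rewrite indic_cell [N t == n]eq_sym Ntn andbF mulr0.
rewrite addr0 (bigD1 (X t == 1)) //= [X in _ + X]big1 => [|b /negbTE Xtb]; last first.
  by rewrite indic_cell eq_sym Xtb mulr0.
by rewrite indic_cell !eqxx mulr1 addr0.
Qed.

Lemma Ex_cells_sum (F : bool -> I -> T -> R) : (forall b n, F b n \in Lfun P 1) ->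
  (fun t => \sum_n \sum_(b : bool) F b n t) \in Lfun P 1 /\
  Ex P (fun t => \sum_n \sum_(b : bool) F b n t) =
    \sum_n (Ex P (F true n) + Ex P (F false n)).
Proof.
move=> F1; have inner n := Ex_sum P (index_enum bool) (F^~ n) (F1^~ n).
have [outer1 ->] := Ex_sum P (index_enum I) _ (fun n => (inner n).1).
by split => //; apply: eq_bigr => n _; rewrite (inner n).2 big_bool.
Qed.

Lemma Ex_of_cells A : of_cells A \in Lfun P 1 /\
  Ex P (of_cells A) = \sum_n (A true n * cellP true n + A false n * cellP false n).
Proof.
have -> : of_cells A = fun t => \sum_n \sum_(b : bool) A b n * \1_(cell b n) t.
  by apply/funext => t; exact: of_cells_decomp.
have indic1 b n : (\1_(cell b n) : T -> R) \in Lfun P 1 by exact/Lfun_indic/measurable_cell.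
have [? ->] := Ex_cells_sum (fun b n t => A b n * \1_(cell b n) t)
  (fun b n => LfunZ P _ (A b n) (indic1 b n)).
by split => //; apply: eq_bigr => n _; rewrite !ExZ ?Ex_indic //; exact: measurable_cell.
Qed.

Lemma Ex_of_cells_mul A Y : Y \in Lfun P 1 ->
  Ex P (fun t => of_cells A t * Y t) =
    \sum_n (A true n * cellE Y true n + A false n * cellE Y false n).
Proof.
move=> Y1; have YI1 b n := Lfun_mul_indic P _ _ (measurable_cell b n) Y1.
have -> : (fun t => of_cells A t * Y t) =
    fun t => \sum_n \sum_(b : bool) A b n * (Y t * \1_(cell b n) t).
  apply/funext => t; rewrite of_cells_decomp big_distrl; apply: eq_bigr => n _.
  by rewrite big_distrl; apply: eq_bigr => b _ /=; ring.
have [_ ->] := Ex_cells_sum _ (fun b n => LfunZ P _ (A b n) (YI1 b n)).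
by apply: eq_bigr => n _; rewrite !ExZ.
Qed.

Lemma of_cells_indic A b n t :
  of_cells A t * \1_(cell b n) t = A b n * \1_(cell b n) t.
Proof.
by rewrite indic_cell /of_cells; case: andP => [[/eqP -> /eqP ->]|_]; rewrite ?mulr0.
Qed.

Lemma indic_Nev n t : \1_(Nev N n) t = \1_(cell true n) t + \1_(cell false n) t :> R.
Proof.
rewrite !indic_cell indicE; have [Ntn|Ntn] := eqVneq (N t) n.
  by rewrite (mem_set (Ntn : Nev N n t)); case: (X t == 1); rewrite /= ?addr0 ?add0r.
by rewrite memNset ?(negbTE Ntn) ?andbF ?addr0 //; exact/eqP.
Qed.

Lemma Ex_of_cells_at A n : Ex P (fun t => of_cells A t * \1_(Nev N n) t) =
  A true n * cellP true n + A false n * cellP false n.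
Proof.
have indic1 b := Lfun_indic P _ (measurable_cell b n).
under eq_fun do rewrite indic_Nev mulrDr !of_cells_indic.
by rewrite ExD ?LfunZ // !ExZ // !Ex_indic //; exact: measurable_cell.
Qed.

Lemma Ex_of_cells_mul_at A Y n : Y \in Lfun P 1 ->
  Ex P (fun t => of_cells A t * Y t * \1_(Nev N n) t) =
    A true n * cellE Y true n + A false n * cellE Y false n.
Proof.
move=> Y1; have YI1 b := Lfun_mul_indic P _ _ (measurable_cell b n) Y1.
have cellwise b t : of_cells A t * (Y t * \1_(cell b n) t) = A b n * (Y t * \1_(cell b n) t).
  by rewrite mulrCA of_cells_indic mulrCA.
under eq_fun do rewrite indic_Nev -mulrA !mulrDr !cellwise.
by rewrite ExD ?LfunZ // !ExZ.
Qed.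

Lemma cellE_of_cells A b n : cellE (of_cells A) b n = A b n * cellP b n.
Proof.
rewrite /cellE; under eq_fun do rewrite of_cells_indic.
by rewrite ExZ ?Ex_indic ?Lfun_indic //; exact: measurable_cell.
Qed.

Lemma p_cells n : p_ P N n = cellP true n + cellP false n.
Proof.
rewrite /p_ -Ex_indic //.
have -> : (\1_(Nev N n) : T -> R) = fun t => of_cells (fun _ _ => 1) t * \1_(Nev N n) t.
  by apply/funext => t; rewrite mul1r.
by rewrite Ex_of_cells_at !mul1r.
Qed.

Lemma X_cells n : X_ P X N n = cellP true n / (cellP true n + cellP false n).
Proof.
rewrite /X_ /condE -/(p_ P N n) p_cells.
have -> : (fun t => X t * \1_(Nev N n) t) =
    fun t => of_cells (fun b _ => b%:R) t * \1_(Nev N n) t.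
  by apply/funext => t; rewrite {1}X_bool.
by rewrite Ex_of_cells_at mul1r mul0r addr0.
Qed.

Lemma Y_cells Y n : Y \in Lfun P 1 -> Y_ P Y N n = Ytot Y n / (cellP true n + cellP false n).
Proof.
move=> Y1; rewrite /Y_ /condE -/(p_ P N n) p_cells.
have -> : (fun t => Y t * \1_(Nev N n) t) =
    fun t => of_cells (fun _ _ => 1) t * Y t * \1_(Nev N n) t.
  by apply/funext => t; rewrite mul1r.
by rewrite Ex_of_cells_mul_at // !mul1r.
Qed.

Lemma condE_YX_cells Y n : Y \in Lfun P 1 ->
  condE P (fun t => Y t * X t) (Nev N n) = cellE Y true n / (cellP true n + cellP false n).
Proof.
move=> Y1; rewrite /condE -/(p_ P N n) p_cells.
have -> : (fun t => Y t * X t * \1_(Nev N n) t) =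
    fun t => of_cells (fun b _ => b%:R) t * Y t * \1_(Nev N n) t.
  by apply/funext => t; rewrite {1}X_bool [Y t * _]mulrC.
by rewrite Ex_of_cells_mul_at // mul1r mul0r addr0.
Qed.

Lemma Ex_of_N (g : I -> R) :
  Ex P (fun t => g (N t)) = \sum_n g n * (cellP true n + cellP false n).
Proof. by rewrite (Ex_of_cells (fun _ m => g m)).2; apply: eq_bigr => n _; rewrite mulrDr. Qed.

Lemma sum_cellP : \sum_n (cellP true n + cellP false n) = 1.
Proof.
by rewrite -(Ex_cst P 1) (Ex_of_N (fun _ => 1)); apply: eq_bigr => n _; rewrite mul1r.
Qed.

Lemma sum_cellP_false : \sum_n cellP false n = 1 - \sum_n cellP true n.
Proof. by rewrite -sum_cellP big_split /= addrC addrK. Qed.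

Lemma Ex_X_cells : X \in Lfun P 1 /\ Ex P X = \sum_n cellP true n.
Proof.
have -> : X = of_cells (fun b _ => b%:R) by apply/funext => t; exact: X_bool.
have [X1 ->] := Ex_of_cells (fun b _ => b%:R).
by split => //; apply: eq_bigr => n _; rewrite mul1r mul0r addr0.
Qed.

Lemma Ex_Y_cells Y : Y \in Lfun P 1 -> Ex P Y = \sum_n Ytot Y n.
Proof.
move=> Y1; have -> : Ex P Y = Ex P (fun t => of_cells (fun _ _ => 1) t * Y t).
  by congr Ex; apply/funext => t; rewrite mul1r.
by rewrite Ex_of_cells_mul //; apply: eq_bigr => n _; rewrite !mul1r.
Qed.

Lemma VarX_cells : VarX P X = \sum_n cellP true n - (\sum_n cellP true n) ^+ 2.
Proof.
have [X1 EX] := Ex_X_cells.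
have XX : (X * X)%R = X.
  apply/funext => t; change (X t * X t = X t).
  by case: (X01 t) => ->; rewrite ?mulr0 ?mulr1.
rewrite /VarX covarianceE // ?XX // -[X in fine (X - _)%E]fineK ?expectation_fin_num //.
rewrite -[X in fine (_ - X * X)%E]fineK ?expectation_fin_num //.
by rewrite -EFinM -EFinB /= -/(Ex P X) EX expr2.
Qed.

Lemma condE_X_eq_cells (b : bool) (Y : T -> R) : Y \in Lfun P 1 ->
  condE P Y [set t | X t = b%:R] = (\sum_n cellE Y b n) / (\sum_n cellP b n).
Proof.
move=> Y1; have mXb := measurable_X_eq b%:R.
pose A := fun b' (_ : I) => (b' == b)%:R : R.
have indicXb t : \1_[set t | X t = b%:R] t = of_cells A t.
  rewrite indicE /of_cells /A; suff -> : (t \in [set t | X t = b%:R]) = ((X t == 1) == b) by [].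
  apply/idP/eqP => [/set_mem ->|Xb]; last by apply/mem_set; rewrite /= X_bool Xb.
  by case: b {mXb A}; rewrite ?eqxx // [_ == 1]eq_sym oner_eq0.
rewrite /condE -Ex_indic //.
have -> : (\1_[set t | X t = b%:R] : T -> R) = of_cells A by apply/funext.
under eq_fun do rewrite mulrC.
rewrite (Ex_of_cells A).2 Ex_of_cells_mul //.
by congr (_ / _); apply: eq_bigr => n _; rewrite /A;
  case: b {mXb indicXb A}; rewrite /= ?mul1r ?mul0r ?addr0 ?add0r.
Qed.

Lemma cellE_bounds (Y : T -> R) (Ylo Yhi : R) : Y \in Lfun P 1 ->
  (forall x n, (x = 0 \/ x = 1) -> 0 < prob P (XNev X N x n) ->
     Ylo <= condE P Y (XNev X N x n) <= Yhi) <->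
  (forall b n, Ylo * cellP b n <= cellE Y b n <= Yhi * cellP b n).
Proof.
move=> Y1; split=> [bnd b n|bnd x n x01].
  have := cellP_ge0 b n; rewrite le_eqVlt => /orP[/eqP q0|q_gt0].
    have null := Ex_mul_indic_null P _ _ (measurable_cell b n) Y1 (esym q0).
    by rewrite -q0 !mulr0 /cellE null lexx.
  have b01 : (b%:R : R) = 0 \/ (b%:R : R) = 1 by case: b {q_gt0}; [right|left].
  by move: (bnd _ n b01 q_gt0); rewrite /condE ler_pdivlMr // ler_pdivrMr.
have [b ->] : exists b : bool, x = (b%:R : R) by case: x01 => ->; [exists false|exists true].
by move=> Px; rewrite /condE ler_pdivlMr // ler_pdivrMr //; exact: bnd.
Qed.

Lemma cells_admissibleP (Y : T -> R) (Ylo Yhi : R) :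
  (forall b n, Ylo * cellP b n <= cellE Y b n <= Yhi * cellP b n) <->
  cells_admissible Ylo Yhi Y.
Proof.
have s0E n : Ytot Y n - cellE Y true n = cellE Y false n by rewrite /Ytot; ring.
rewrite /cells_admissible /cell_admissible; split=> [bnd n|adm [] n].
- by rewrite s0E; split; apply: bnd.
- by case: (adm n).
- by case: (adm n); rewrite s0E.
Qed.

End Cells.

(** * Reduction to cell sums *)

Lemma standingP {R : realType} {I : finType} {d : measure_display} {T : measurableType d}
  (P : probability T R) (X Y : T -> R) (N : T -> I) (Ylo Yhi : R) :
  standing P X Y N Ylo Yhi <->
  [/\ measurable_fun setT X /\ (forall t, X t = 0 \/ X t = 1),
      forall n, measurable (Nev N n),
      exists n, 0 < p_ P N n /\ 0 < X_ P X N n < 1,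
      Y \in Lfun P 1 & cells_admissible P X N Ylo Yhi Y].
Proof.
split=> [[[mX X01] [_ iY] mN pos bnd]|[[mX X01] mN pos Y1 adm]].
  have Y1 : Y \in Lfun P 1 by exact/Lfun1_integrable.
  by split => //; apply/cells_admissibleP/(cellE_bounds P X N mX mN Y Ylo Yhi Y1).
split => //; first by split; [exact: (Lfun_measurable P _ Y1)|exact/Lfun1_integrable].
by apply/(cellE_bounds P X N mX mN Y Ylo Yhi Y1)/cells_admissibleP.
Qed.

Section Reduction.
Context {R : realType} {I : finType} {d : measure_display} {T : measurableType d}
  {P : probability T R} {X Y : T -> R} {N : T -> I} {Ylo Yhi : R}.
Hypothesis hst : standing P X Y N Ylo Yhi.

Local Notation q1 := (cellP P X N true).
Local Notation q0 := (cellP P X N false).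
Local Notation Q1 := (\sum_n q1 n).
Local Notation S := (\sum_n Ytot P X N Y n).
Local Notation Z := (\sum_n cellE P X N Y true n).
Local Notation W := (cells_sum P X N cell_proj Y).
Local Notation L := (cells_sum P X N (cell_lo Ylo Yhi) Y).
Local Notation M := (cells_sum P X N (cell_hi Ylo Yhi) Y).

Let mX : measurable_fun setT X. Proof. by case: ((standingP P X Y N Ylo Yhi).1 hst) => -[]. Qed.
Let X01 : forall t, X t = 0 \/ X t = 1.
Proof. by case: ((standingP P X Y N Ylo Yhi).1 hst) => -[]. Qed.
Let mN : forall n, measurable (Nev N n). Proof. by case: ((standingP P X Y N Ylo Yhi).1 hst). Qed.
Let Y1 : Y \in Lfun P 1. Proof. by case: ((standingP P X Y N Ylo Yhi).1 hst). Qed.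

Let cell_ok n : [/\ 0 <= q1 n, 0 <= q0 n &
  cell_admissible Ylo Yhi (q1 n) (q0 n) (Ytot P X N Y n) (cellE P X N Y true n)].
Proof. by split; [exact: cellP_ge0|exact: cellP_ge0|case: ((standingP P X Y N Ylo Yhi).1 hst)]. Qed.

Let X_n := X_cells P X N mX X01 mN.
Let Y_n n := Y_cells P X N mX X01 mN Y n Y1.
Let EN := Ex_of_N P X N mX X01 mN.

Local Notation pp n := (q1 n + q0 n).
Local Notation proj n := (cell_proj (q1 n) (q0 n) (Ytot P X N Y n)).

Let X_scaled n : X_ P X N n * pp n = q1 n.
Proof. by have [? ? adm_n] := cell_ok n; rewrite X_n (cell_X_scaled _ _ adm_n). Qed.

Let notX_scaled n : (1 - X_ P X N n) * pp n = q0 n.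
Proof. by have [? ? adm_n] := cell_ok n; rewrite X_n (cell_notX_scaled _ _ adm_n). Qed.

Let XY_scaled n : X_ P X N n * Y_ P Y N n * pp n = proj n.
Proof. by have [? ? adm_n] := cell_ok n; rewrite X_n Y_n (cell_XY_scaled _ _ adm_n). Qed.

Let notXY_scaled n : (1 - X_ P X N n) * Y_ P Y N n * pp n = Ytot P X N Y n - proj n.
Proof. by have [? ? adm_n] := cell_ok n; rewrite X_n Y_n (cell_notXY_scaled _ _ adm_n). Qed.

Let cov_scaled n : covN P X Y N n * pp n = cellE P X N Y true n - proj n.
Proof.
have [? ? adm_n] := cell_ok n.
by rewrite /covN (condE_YX_cells P X N mX X01 mN) // X_n Y_n (cell_cov_scaled _ _ adm_n).
Qed.

Let hi_scaled n :
  Num.min (Y_ P Y N n - Ylo * (1 - X_ P X N n)) (Yhi * X_ P X N n) * pp n =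
  cell_hi Ylo Yhi (q1 n) (q0 n) (Ytot P X N Y n).
Proof. by have [? ? adm_n] := cell_ok n; rewrite X_n Y_n (cell_hi_scaled _ _ adm_n). Qed.

Let lo_scaled n :
  Num.min (Y_ P Y N n - Ylo * X_ P X N n) (Yhi * (1 - X_ P X N n)) * pp n =
  Ytot P X N Y n - cell_lo Ylo Yhi (q1 n) (q0 n) (Ytot P X N Y n).
Proof. by have [? ? adm_n] := cell_ok n; rewrite X_n Y_n (cell_lo_scaled _ _ adm_n). Qed.

Lemma sum_cellP1_in01 : 0 < Q1 < 1.
Proof.
have [_ _ [n [p_gt0 /andP[Xn_gt0 Xn_lt1]]] _ _] := (standingP P X Y N Ylo Yhi).1 hst.
rewrite (p_cells P X N mX X01 mN) in p_gt0; rewrite X_n in Xn_gt0 Xn_lt1.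
have q1_gt0 : 0 < q1 n by rewrite -(X_scaled n) X_n mulr_gt0.
have q0_gt0 : 0 < q0 n by rewrite -(notX_scaled n) X_n mulr_gt0 ?subr_gt0.
have sum_ge m (F : I -> R) : (forall i, 0 <= F i) -> F m <= \sum_i F i.
  by move=> F_ge0; rewrite (bigD1 m) //= lerDl sumr_ge0.
rewrite (lt_le_trans q1_gt0 (sum_ge n _ (cellP_ge0 P X N true))) /= -subr_gt0.
rewrite -(sum_cellP_false P X N mX X01 mN).
exact: lt_le_trans q0_gt0 (sum_ge n _ (cellP_ge0 P X N false)).
Qed.

Lemma Dgap_gap : Dgap P X Y = gap Q1 S Z.
Proof.
have means b := condE_X_eq_cells P X N mX X01 mN b Y Y1.
rewrite /Dgap (means true) (means false) (sum_cellP_false P X N mX X01 mN).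
have -> : \sum_n cellE P X N Y false n = S - Z.
  by rewrite -sumrB; apply: eq_bigr => n _; rewrite /Ytot addrC addKr.
exact: means_diff_gap sum_cellP1_in01 Z.
Qed.

Lemma deltaB_cells : deltaB P X Y N = Z - W.
Proof.
by rewrite /deltaB (EN (covN P X Y N)) (eq_bigr _ (fun n _ => cov_scaled n)) sumrB.
Qed.

Lemma D_NM_gap : D_NM P X Y N = gap Q1 S W.
Proof.
rewrite /D_NM (EN (fun n => X_ P X N n * Y_ P Y N n)) (EN (X_ P X N)).
rewrite (EN (fun n => (1 - X_ P X N n) * Y_ P Y N n)) (EN (fun n => 1 - X_ P X N n)).
rewrite (eq_bigr _ (fun n _ => XY_scaled n)) (eq_bigr _ (fun n _ => X_scaled n)).
rewrite (eq_bigr _ (fun n _ => notXY_scaled n)) (eq_bigr _ (fun n _ => notX_scaled n)).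
by rewrite sumrB (sum_cellP_false P X N mX X01 mN) (means_diff_gap sum_cellP1_in01).
Qed.

Lemma D_MOBp_gap : D_MOBp P X Y N Ylo Yhi = gap Q1 S M.
Proof.
rewrite /D_MOBp (EN (fun n =>
  Num.min (Y_ P Y N n - Ylo * (1 - X_ P X N n)) (Yhi * X_ P X N n))).
rewrite (eq_bigr _ (fun n _ => hi_scaled n)) (Ex_X_cells P X N mX X01 mN).2.
by rewrite (Ex_Y_cells P X N mX X01 mN Y Y1) (VarX_cells P X N mX X01 mN).
Qed.

Lemma D_MOBm_gap : D_MOBm P X Y N Ylo Yhi = gap Q1 S L.
Proof.
rewrite /D_MOBm (EN (fun n =>
  Num.min (Y_ P Y N n - Ylo * X_ P X N n) (Yhi * (1 - X_ P X N n)))).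
rewrite (eq_bigr _ (fun n _ => lo_scaled n)) sumrB (Ex_X_cells P X N mX X01 mN).2.
rewrite (Ex_Y_cells P X N mX X01 mN Y Y1) (VarX_cells P X N mX X01 mN) /gap.
by congr (_ / _); rewrite /cells_sum; ring.
Qed.

Lemma EXY_in_cells_range : L <= Z <= M.
Proof.
by apply/andP; split; apply: ler_sum => n _; have [_ _ /cell_admissibleP/andP[]] := cell_ok n.
Qed.

Lemma EXNYN_in_cells_range : L <= W <= M.
Proof.
apply/andP; split; apply: ler_sum => n _; have [q1_ge0 q0_ge0 adm_n] := cell_ok n;
  by have /cell_admissibleP/andP[] := cell_proj_admissible q1_ge0 q0_ge0 adm_n.
Qed.

End Reduction.

(** * Sharpness *)

Section Sharpness.
Context {R : realType} {I : finType} {d : measure_display} {T : measurableType d}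
  {P : probability T R} {X Y : T -> R} {N : T -> I} {Ylo Yhi : R}.
Hypothesis hst : standing P X Y N Ylo Yhi.

Local Notation q1 := (cellP P X N true).
Local Notation q0 := (cellP P X N false).
Local Notation Stot := (Ytot P X N Y).

Lemma exists_Y_of_EXY Z0 :
  cells_sum P X N (cell_lo Ylo Yhi) Y <= Z0 -> Z0 <= cells_sum P X N (cell_hi Ylo Yhi) Y ->
  exists Y' : T -> R, [/\ standing P X Y' N Ylo Yhi, same_observed P X Y N P X Y' N,
    deltaB P X Y' N = Z0 - cells_sum P X N cell_proj Y &
    Dgap P X Y' = gap (\sum_n q1 n) (\sum_n Stot n) Z0].
Proof.
have [[mX X01] mN pos Y1 adm] := (standingP P X Y N Ylo Yhi).1 hst.
move=> LZ ZM.
have lo_le_hi n :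
    cell_lo Ylo Yhi (q1 n) (q0 n) (Stot n) <= cell_hi Ylo Yhi (q1 n) (q0 n) (Stot n).
  exact: cell_lo_le_hi (adm n).
have [sg sg_range sg_sum] := sum_interpolate _ _ _ lo_le_hi LZ ZM.
have sg_adm n : cell_admissible Ylo Yhi (q1 n) (q0 n) (Stot n) (sg n) by apply/cell_admissibleP.
(* [Y'] is constant on each cell, with cell integrals [sg n] and [Stot n - sg n]. *)
pose A b n := if b then sg n / q1 n else (Stot n - sg n) / q0 n.
pose Y' := of_cells X N A.
have cellE'1 n : cellE P X N Y' true n = sg n.
  by rewrite (cellE_of_cells P X N mX X01 mN) /A /=; case: (sg_adm n) => /divfK_sandwich.
have cellE'0 n : cellE P X N Y' false n = Stot n - sg n.
  by rewrite (cellE_of_cells P X N mX X01 mN) /A /=; case: (sg_adm n) => _ /divfK_sandwich.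
have Stot' : Ytot P X N Y' = Stot by apply/funext => n; rewrite /Ytot cellE'1 cellE'0 subrKC.
have Y'1 := (Ex_of_cells P X N mX X01 mN A).1.
have hst' : standing P X Y' N Ylo Yhi.
  by apply/standingP; split => // n; rewrite Stot' cellE'1.
exists Y'; split => //.
- by move=> n; rewrite !(Y_cells P X N mX X01 mN) // Stot'.
- by rewrite (deltaB_cells hst') /cells_sum Stot' (eq_bigr _ (fun n _ => cellE'1 n)) sg_sum.
- by rewrite (Dgap_gap hst') Stot' (eq_bigr _ (fun n _ => cellE'1 n)) sg_sum.
Qed.

End Sharpness.

Theorem proposition7 (R : realType) (I : finType) (Ylo Yhi : R)
  (d : measure_display) (T : measurableType d) (P : probability T R)
  (X Y : T -> R) (N : T -> I) :
  Ylo <= Yhi ->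
  standing P X Y N Ylo Yhi ->
  (* (i) *)
  (0 <= deltaB P X Y N ->
     D_NM P X Y N <= Dgap P X Y <= D_MOBp P X Y N Ylo Yhi) /\
  (* (ii) *)
  (deltaB P X Y N <= 0 ->
     D_MOBm P X Y N Ylo Yhi <= Dgap P X Y <= D_NM P X Y N) /\
  (* (iii) sharpness of (i) *)
  (0 <= deltaB P X Y N ->
     forall D0 : R, D_NM P X Y N <= D0 <= D_MOBp P X Y N Ylo Yhi ->
     exists (d' : measure_display) (T' : measurableType d')
            (P' : probability T' R) (X' Y' : T' -> R) (N' : T' -> I),
       [/\ standing P' X' Y' N' Ylo Yhi,
           same_observed P X Y N P' X' Y' N',
           0 <= deltaB P' X' Y' N' &
           Dgap P' X' Y' = D0]) /\
  (* (iii) sharpness of (ii) *)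
  (deltaB P X Y N <= 0 ->
     forall D0 : R, D_MOBm P X Y N Ylo Yhi <= D0 <= D_NM P X Y N ->
     exists (d' : measure_display) (T' : measurableType d')
            (P' : probability T' R) (X' Y' : T' -> R) (N' : T' -> I),
       [/\ standing P' X' Y' N' Ylo Yhi,
           same_observed P X Y N P' X' Y' N',
           deltaB P' X' Y' N' <= 0 &
           Dgap P' X' Y' = D0]).
Proof.
move=> _ hst; have Q1_01 := sum_cellP1_in01 hst.
have /andP[LZ ZM] := EXY_in_cells_range hst; have /andP[LW WM] := EXNYN_in_cells_range hst.
rewrite (Dgap_gap hst) (deltaB_cells hst) (D_NM_gap hst) (D_MOBp_gap hst) (D_MOBm_gap hst).
rewrite subr_ge0 subr_le0; split; [|split; [|split]].
- by move=> WZ; rewrite !(ler_gap Q1_01) WZ ZM.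
- by move=> ZW; rewrite !(ler_gap Q1_01) LZ ZW.
- move=> _ D0 /(gap_onto Q1_01) [Z0 /andP[WZ0 Z0M] <-].
  have [Y' [st obs dB dg]] := exists_Y_of_EXY hst _ (le_trans LW WZ0) Z0M.
  by exists d, T, P, X, Y', N; rewrite dB dg subr_ge0.
- move=> _ D0 /(gap_onto Q1_01) [Z0 /andP[LZ0 Z0W] <-].
  have [Y' [st obs dB dg]] := exists_Y_of_EXY hst _ LZ0 (le_trans Z0W WM).
  by exists d, T, P, X, Y', N; rewrite dB dg subr_le0.
Qed.
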